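(* Let $A \in \mathbb{R}^{m\times n}$ be semimonotone, i.e. $A^{\dagger}\geq 0$, and let $A=U-V$ be a proper weak regular splitting of type II of $A$. Suppose that $\rho(U^{\dagger}V)>0$. Then there exists a vector $x\in\mathbb{R}^n$ with $x\geq 0$, $x\neq 0$, such that $U^{\dagger}Vx=\rho(U^{\dagger}V)x$, $Ax\geq 0$ with $Ax\neq 0$, and $Vx\geq 0$ with $Vx\neq 0$.
   Context: $A^{\dagger}$ denotes the Moore–Penrose inverse and $\rho(\cdot)$ the spectral radius. Inequalities between matrices/vectors are entrywise. A splitting $A=U-V$ (with $U,V$ of the same size as $A$) is proper if $R(U)=R(A)$ and $N(U)=N(A)$ (range and null space). A proper splitting $A=U-V$ is a proper weak regular splitting of type II if $U^{\dagger}\geq 0$ and $VU^{\dagger}\geq 0$. *)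

From HB Require Import structures.
From mathcomp Require Import all_boot all_order all_algebra.
From mathcomp Require Import complex.
Set Implicit Arguments. Unset Strict Implicit. Unset Printing Implicit Defensive.
Import Order.TTheory GRing.Theory Num.Theory.
Local Open Scope ring_scope.
Local Open Scope complex_scope.

Section Defs.
Variable R : rcfType.

Definition mx_nonneg (m n : nat) (M : 'M[R]_(m, n)) : Prop :=
  forall i j, 0 <= M i j.

Definition is_MP_inverse (m n : nat) (A : 'M[R]_(m, n)) (X : 'M[R]_(n, m)) : Prop :=
  [/\ A *m X *m A = A, X *m A *m X = X,
      (A *m X)^T = A *m X & (X *m A)^T = X *m A].

(* complex eigenvalues (with multiplicity) of a real square matrix:
   the roots of its characteristic polynomial in R[i] *)
Definition eigs (n : nat) (M : 'M[R]_n) : seq R[i] :=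
  sval (closed_field_poly_normal (char_poly (map_mx (real_complex R) M))).

Definition cmod (z : R[i]) : R := let: Complex a b := z in Num.sqrt (a ^+ 2 + b ^+ 2).

(* spectral radius: max modulus of the eigenvalues (0 for the empty matrix) *)
Definition spectral_radius (n : nat) (M : 'M[R]_n) : R :=
  \big[Num.max/0]_(z <- eigs M) cmod z.

(* range and null space of column-vector maps x |-> M x *)
Definition proper_splitting (m n : nat) (A U V : 'M[R]_(m, n)) : Prop :=
  [/\ A = U - V,
      (forall y : 'cV[R]_m, (exists x : 'cV[R]_n, y = U *m x) <->
                             (exists x : 'cV[R]_n, y = A *m x))
    & (forall x : 'cV[R]_n, U *m x = 0 <-> A *m x = 0)].

(* A = U - V is a proper weak regular splitting of type II, Ud being U^dagger *)
Definition proper_weak_regular_II (m n : nat) (A U V : 'M[R]_(m, n))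
    (Ud : 'M[R]_(n, m)) : Prop :=
  [/\ proper_splitting A U V, mx_nonneg Ud & mx_nonneg (V *m Ud)].

End Defs.

(* Perron-Frobenius applied to the nonnegative matrix B = V U^+ gives y >= 0,
   y <> 0 with B y = rho y, where rho = rho(U^+ V) = rho(V U^+).  Put x = U^+ y,
   so that V x = rho y and U^+ V x = rho x.  The range of V = U - A lies in that
   of U, hence U x = y and A x = (1 - rho) y; as N(A) = N(U) and x lies in the
   range of U^T, A^+ A x = x, i.e. x = (1 - rho) A^+ y with A^+ y >= 0, which
   forces rho < 1 and gives the sign conditions.

   The Perron-Frobenius step is algebraic.  For t > 0 the polynomial vector
   q(t) = adj((t + rho) I - B) 1 is nonnegative: it is so for large t, and it
   cannot change sign because det((t + rho) I - B) > 0 and B >= 0.  Its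
   lowest-order coefficient c >= 0 satisfies rho c - B c = a 1 with a >= 0, and
   a > 0 would put every eigenvalue of B strictly inside the disc of radius rho. *)

From HB Require Import structures.
From mathcomp Require Import all_boot all_order all_algebra.
From mathcomp Require Import complex polyrcf lra.
Set Implicit Arguments.
Unset Strict Implicit.
Unset Printing Implicit Defensive.
Import Order.TTheory GRing.Theory Num.Theory.
Local Open Scope ring_scope.

Section ComplexModulus.
Variable R : rcfType.
Local Open Scope complex_scope.
Implicit Types z w : R[i].

Lemma normC_cmod z : `|z| = (cmod z)%:C.
Proof. by case: z. Qed.

Lemma cmod_ge0 z : 0 <= cmod z.
Proof. by rewrite -ler0c -normC_cmod. Qed.

Lemma cmodM z w : cmod (z * w) = cmod z * cmod w.
Proof. by apply: complexI; rewrite rmorphM /= -!normC_cmod normrM. Qed.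

Lemma cmod_eq0 z : (cmod z == 0) = (z == 0).
Proof. by rewrite -[z == 0]normr_eq0 normC_cmod; apply/eqP/eqP => [->//|/complexI]. Qed.

Lemma cmod0 : cmod 0 = 0 :> R.
Proof. by apply/eqP; rewrite cmod_eq0. Qed.

Lemma cmodR (x : R) : cmod x%:C = `|x|.
Proof.
by change (Num.sqrt (x ^+ 2 + 0 ^+ 2) = `|x|); rewrite expr0n addr0 sqrtr_sqr.
Qed.

End ComplexModulus.

Lemma eigenvalue_mulmxC (F : fieldType) m n (P : 'M[F]_(m, n)) (Q : 'M[F]_(n, m)) a :
  a != 0 -> eigenvalue (P *m Q) a -> eigenvalue (Q *m P) a.
Proof.
move=> a_neq0 /eigenvalueP [u uPQ u_neq0]; apply/eigenvalueP; exists (u *m P).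
  by rewrite mulmxA -(mulmxA u) uPQ scalemxAl.
apply: contra u_neq0 => /eqP uP0.
have : a *: u == 0 by rewrite -uPQ mulmxA uP0 mul0mx.
by rewrite scaler_eq0 (negPf a_neq0).
Qed.

Lemma root_char_poly_col_eigen (F : fieldType) n (M : 'M[F]_n) a :
  root (char_poly M) a -> exists2 v : 'cV_n, v != 0 & M *m v = a *: v.
Proof.
have -> : char_poly M = char_poly M^T.
  rewrite /char_poly /char_poly_mx -det_tr; congr (\det _).
  by rewrite linearB /= tr_scalar_mx map_trmx.
rewrite -eigenvalue_root_char => /eigenvalueP [v vM v_neq0].
exists v^T; first by rewrite trmx_eq0.
by rewrite -[M]trmxK -trmx_mul vM linearZ.
Qed.

Section SpectralRadius.
Variable R : rcfType.
Local Notation toC := (real_complex R).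

Lemma mem_eigs n (M : 'M[R]_n) z : (z \in eigs M) = eigenvalue (map_mx toC M) z.
Proof.
rewrite eigenvalue_root_char /eigs; case: closed_field_poly_normal => s /= ->.
by rewrite (monicP (char_poly_monic _)) scale1r root_prod_XsubC.
Qed.

Lemma cmod_le_spectral_radius n (M : 'M[R]_n) z :
  z \in eigs M -> cmod z <= spectral_radius M.
Proof. by move=> zM; apply: le_bigmax_seq. Qed.

Lemma spectral_radius_ge0 n (M : 'M[R]_n) : 0 <= spectral_radius M.
Proof. exact: bigmax_ge_id. Qed.

Lemma spectral_radius_attained n (M : 'M[R]_n) : 0 < spectral_radius M ->
  exists2 z, z \in eigs M & cmod z = spectral_radius M.
Proof.
rewrite /spectral_radius; elim: (eigs M) => [|z s IHs]; first by rewrite big_nil ltxx.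
rewrite big_cons maxEle; case: ifP => [_ /IHs [w ws <-]|_ _].
  by exists w; rewrite // in_cons ws orbT.
by exists z; rewrite ?in_cons ?eqxx.
Qed.

Lemma eigenvalue_le_spectral_radius n (M : 'M[R]_n) (s : R) :
  eigenvalue M s -> s <= spectral_radius M.
Proof.
rewrite eigenvalue_root_char => /(rmorph_root toC).
rewrite map_char_poly -eigenvalue_root_char -mem_eigs => /cmod_le_spectral_radius.
by rewrite cmodR; apply: le_trans; apply: ler_norm.
Qed.

Lemma spectral_radius_mulmxC m n (P : 'M[R]_(m, n)) (Q : 'M[R]_(n, m)) :
  spectral_radius (P *m Q) = spectral_radius (Q *m P).
Proof.
wlog suff : m n P Q / spectral_radius (P *m Q) <= spectral_radius (Q *m P).
  by move=> le_PQ; apply/le_anti; rewrite !le_PQ.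
rewrite {1}/spectral_radius big_seq; apply: bigmax_le => [|z zPQ].
  exact: spectral_radius_ge0.
have [-> | z_neq0] := eqVneq z 0.
  by rewrite cmod0 spectral_radius_ge0.
apply: cmod_le_spectral_radius; move: zPQ; rewrite !mem_eigs !map_mxM.
exact: eigenvalue_mulmxC.
Qed.

End SpectralRadius.

Section NonnegMatrices.
Variable R : rcfType.

Lemma mx_nonneg_mul m n p (M : 'M[R]_(m, n)) (N : 'M[R]_(n, p)) :
  mx_nonneg M -> mx_nonneg N -> mx_nonneg (M *m N).
Proof. by move=> M_ge0 N_ge0 i j; rewrite mxE sumr_ge0 // => k _; apply: mulr_ge0. Qed.

Lemma mx_nonneg_scale m n a (M : 'M[R]_(m, n)) :
  0 <= a -> mx_nonneg M -> mx_nonneg (a *: M).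
Proof. by move=> a_ge0 M_ge0 i j; rewrite mxE mulr_ge0. Qed.

Lemma mx_nonneg_scale_gt0 m n a (M N : 'M[R]_(m, n)) :
  mx_nonneg M -> M != 0 -> mx_nonneg N -> M = a *: N -> 0 < a.
Proof.
move=> M_ge0 /matrix0Pn [i [j Mij_neq0]] N_ge0 MaN.
have : 0 < M i j by rewrite lt0r Mij_neq0 M_ge0.
by rewrite MaN mxE ltNge; apply: contraNT; rewrite -leNgt => /mulr_le0_ge0 ->.
Qed.

Lemma cmod_eigs_lt_of_subinvariant m (B : 'M[R]_m) (c : 'cV[R]_m) (r : R) z :
  mx_nonneg B -> (forall i, 0 < c i 0) -> (forall i, (B *m c) i 0 < r * c i 0) ->
  z \in eigs B -> cmod z < r.
Proof.
move=> B_ge0 c_gt0 Bc_lt.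
rewrite mem_eigs eigenvalue_root_char => /root_char_poly_col_eigen [v v_neq0 Bv].
have [i0 [j0 v_i0]] := matrix0Pn _ v_neq0; rewrite ord1 in v_i0.
pose nv j := cmod (v j 0).
have [i _ nv_max] := @arg_maxP _ _ _ i0 xpredT (fun j => nv j / c j 0) isT.
set M := nv i / c i 0 in nv_max.
have nv_i0 : 0 < nv i0 by rewrite lt0r cmod_eq0 v_i0 cmod_ge0.
have M_gt0 : 0 < M by apply: lt_le_trans (nv_max i0 isT); rewrite divr_gt0.
have nv_le j : nv j <= M * c j 0 by rewrite -ler_pdivrMr //; apply: nv_max.
have nv_i : 0 < nv i by move: M_gt0; rewrite pmulr_lgt0 // invr_gt0.
have triangle : cmod z * nv i <= \sum_j B i j * nv j.
  rewrite -lecR -cmodM rmorph_sum /= -normC_cmod.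
  have -> : z * v i 0 = (z *: v) i 0 by rewrite mxE.
  rewrite -Bv mxE (le_trans (ler_norm_sum _ _ _)) //; apply: ler_sum => j _.
  by rewrite mxE normrM !normC_cmod cmodR ger0_norm // -rmorphM.
have dominated : \sum_j B i j * nv j <= M * (B *m c) i 0.
  by rewrite mxE mulr_sumr; apply: ler_sum => k _; rewrite mulrCA ler_wpM2l.
have subinv : M * (B *m c) i 0 < r * nv i.
  by rewrite -[nv i](divfK (lt0r_neq0 (c_gt0 i))) -/M mulrCA ltr_pM2l.
by rewrite -(ltr_pM2r nv_i) (le_lt_trans triangle) ?(le_lt_trans dominated).
Qed.

End NonnegMatrices.

Section PolynomialSigns.
Variable R : rcfType.

Lemma poly_lowest_coef_ge0 (f : {poly R}) k :
  (forall j, (j < k)%N -> f`_j = 0) -> (forall t, 0 < t -> 0 <= f.[t]) -> 0 <= f`_k.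
Proof.
move=> f_low f_ge0; rewrite leNgt; apply/negP => fk_lt0.
pose g := drop_poly k f.
have fE : f = g * 'X^k.
  rewrite -{1}(poly_take_drop k f) [take_poly k f](_ : _ = 0) ?add0r //.
  by apply/polyP => j; rewrite coef_take_poly coef0; case: ltnP => // /f_low.
have g0_lt0 : g.[0] < 0 by rewrite horner_coef0 coef_drop_poly add0n.
have [d d_gt0 g_near0] :
    exists2 d, 0 < d & forall y, `|y - 0| < d -> `|g.[y] - g.[0]| < - g.[0].
  by apply: poly_cont; rewrite oppr_gt0.
have d2_gt0 : 0 < d / 2 by rewrite divr_gt0.
have : `|g.[d / 2] - g.[0]| < - g.[0].
  by apply: g_near0; rewrite subr0 gtr0_norm // ltr_pdivrMr // ltr_pMr // ltr1n.
move=> /(le_lt_trans (ler_norm _)); rewrite ltrBlDr addrC subrr => gd_lt0.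
by move: (f_ge0 _ d2_gt0); rewrite fE hornerM hornerXn leNgt pmulr_llt0 ?exprn_gt0 // gd_lt0.
Qed.

Lemma poly_family_ge0_left (I : finType) (f : I -> {poly R}) (a b : R) :
  a < b -> (forall j, 0 < (f j).[b]) ->
  (forall t, a <= t <= b -> (forall j, 0 <= (f j).[t]) -> forall j, 0 < (f j).[t]) ->
  forall j, 0 <= (f j).[a].
Proof.
move=> ab fb_gt0 f_pos j; rewrite leNgt; apply/negP => fa_lt0.
pose G := \prod_k f k.
have G_pos t : (forall k, 0 < (f k).[t]) -> 0 < G.[t].
  by move=> ft_gt0; rewrite horner_prod prodr_gt0.
have G_root k y : y < b -> (f k).[y] < 0 -> exists2 x, x \in `]y, b[ & root G x.
  move=> yb fy_lt0; have [|x xin fx0] := @poly_ivtoo _ (f k) y b (ltW yb).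
    by rewrite pmulr_llt0.
  by exists x; rewrite // /root horner_prod (bigD1 k) //= (rootP fx0) mul0r.
case: (prev_rootP G a b) => [G0 | y _ Gy0 yin no_root | c _ _ no_root].
- by have := G_pos b fb_gt0; rewrite G0 hornerC ltxx.
- have f_ge0 k : 0 <= (f k).[y].
    have yb : y < b by rewrite (itvP yin).
    by rewrite leNgt; apply/negP => /(G_root k y yb) [x /no_root /negP].
  have y_ab : a <= y <= b by rewrite !(itvP yin).
  by have := G_pos y (f_pos y y_ab f_ge0); rewrite Gy0 ltxx.
- by have [x /no_root /negP] := G_root j a ab fa_lt0.
Qed.

End PolynomialSigns.

Section PerronFrobenius.
Variables (R : rcfType) (m : nat) (B : 'M[R]_m) (r : R).
Hypotheses (B_ge0 : mx_nonneg B) (r_gt0 : 0 < r)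
  (no_eigenvalue_gt : forall s, r < s -> ~~ eigenvalue B s).

(* [p.[t] = det ((t + r) - B)] and [q.[t] = p.[t] * ((t + r) - B)^-1 1]: the
   resolvent of [B] at [t + r], cleared of denominators by the adjugate. *)
Let p := char_poly (B - r%:M).
Let q i : {poly R} := (\adj (char_poly_mx (B - r%:M)) *m const_mx 1 : 'cV_m) i 0.

Lemma resolvent_adjE i : ('X + r%:P) * q i = p + \sum_j (B i j)%:P * q j.
Proof.
have PE : char_poly_mx (B - r%:M) = ('X + r%:P)%:M - map_mx polyC B.
  by rewrite /char_poly_mx map_mxB map_scalar_mx /= opprB addrA raddfD.
have PE_entry (v : 'cV_m) :
    (char_poly_mx (B - r%:M) *m v) i 0 = ('X + r%:P) * v i 0 - \sum_j (B i j)%:P * v j 0.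
  by rewrite PE mulmxBl mul_scalar_mx !mxE; congr (_ - _); apply: eq_bigr => j _; rewrite mxE.
have := congr1 (fun M : 'cV_m => M i 0)
  (mulmxA (char_poly_mx (B - r%:M)) (\adj (char_poly_mx (B - r%:M))) (const_mx 1)).
rewrite PE_entry mul_mx_adj mul_scalar_mx [X in _ = X]mxE [in X in _ = X]mxE mulr1.
by move/eqP; rewrite subr_eq addrC => /eqP.
Qed.

Lemma resolvent_adj_horner (t : R) i :
  (t + r) * (q i).[t] = p.[t] + \sum_j B i j * (q j).[t].
Proof.
have := congr1 (horner^~ t) (resolvent_adjE i).
rewrite hornerM hornerD hornerX hornerC hornerD => ->; congr (_ + _).
by rewrite horner_sum; apply: eq_bigr => j _; rewrite hornerM hornerC.
Qed.

Lemma resolvent_adj_coef k i :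
  (if k == 0%N then 0 else (q i)`_k.-1) + r * (q i)`_k
    = p`_k + \sum_j B i j * (q j)`_k.
Proof.
have := congr1 (fun f : {poly R} => f`_k) (resolvent_adjE i).
rewrite mulrDl coefD coefXM coefCM coefD => ->; congr (_ + _).
by rewrite coef_sum; apply: eq_bigr => j _; rewrite coefCM.
Qed.

Lemma char_poly_shift_gt0 (t : R) : 0 < t -> 0 < p.[t].
Proof.
move=> t_gt0.
have no_root : {in `[t, +oo[, forall u, ~~ root p u}.
  move=> u; rewrite in_itv /= andbT => tu.
  have : ~~ eigenvalue B (u + r).
    by apply: no_eigenvalue_gt; rewrite ltrDr (lt_le_trans t_gt0 tu).
  apply: contra; rewrite -eigenvalue_root_char => /eigenvalueP [w wC w_neq0].
  apply/eigenvalueP; exists w => //.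
  by rewrite scalerDl -wC mulmxBr mul_mx_scalar subrK.
have := sgp_pinftyP no_root (_ : t \in `[t, +oo[).
rewrite in_itv /= lexx /sgp_pinfty (monicP (char_poly_monic _)) sgr1.
by move=> /(_ isT) /eqP; rewrite sgr_cp0.
Qed.

Lemma resolvent_adj_gt0 (t : R) i :
  0 < t -> (forall j, 0 <= (q j).[t]) -> 0 < (q i).[t].
Proof.
move=> t_gt0 q_ge0.
have : 0 < (t + r) * (q i).[t].
  rewrite resolvent_adj_horner (lt_le_trans (char_poly_shift_gt0 t_gt0)) //.
  by rewrite lerDl sumr_ge0 // => j _; apply: mulr_ge0.
by rewrite pmulr_rgt0 // addr_gt0.
Qed.

Lemma resolvent_adj_ge0_large (t : R) j :
  \sum_i \sum_k B i k < t -> 0 <= (q j).[t].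
Proof.
move=> t_large.
have B_sum_ge0 : 0 <= \sum_i \sum_k B i k by do 2!(apply: sumr_ge0 => ? _).
have t_gt0 : 0 < t := le_lt_trans B_sum_ge0 t_large.
have [i _ q_min] := @arg_minP _ _ _ j xpredT (fun k => (q k).[t]) isT.
apply: le_trans (q_min j isT); rewrite leNgt; apply/negP => qi_lt0.
have row_dominated : (\sum_k B i k) * (q i).[t] <= \sum_k B i k * (q k).[t].
  by rewrite mulr_suml; apply: ler_sum => k _; rewrite ler_wpM2l ?q_min.
have row_le : \sum_k B i k <= \sum_i \sum_k B i k.
  by rewrite [X in _ <= X](bigD1 i) //= lerDl; do 2!(apply: sumr_ge0 => ? _).
have gap_gt0 : 0 < t + r - \sum_k B i k.
  by rewrite subr_gt0 (le_lt_trans row_le) // (lt_trans t_large) // ltrDl.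
have : 0 < (t + r - \sum_k B i k) * (q i).[t].
  rewrite mulrBl resolvent_adj_horner (lt_le_trans (char_poly_shift_gt0 t_gt0)) //.
  by rewrite -addrA lerDl subr_ge0.
by rewrite pmulr_rgt0 // => /(lt_trans qi_lt0); rewrite ltxx.
Qed.

Lemma resolvent_adj_ge0 (t : R) i : 0 < t -> 0 <= (q i).[t].
Proof.
move=> t_gt0; pose b := t + 1 + \sum_i \sum_k B i k.
have B_sum_ge0 : 0 <= \sum_i \sum_k B i k by do 2!(apply: sumr_ge0 => ? _).
apply: (@poly_family_ge0_left _ _ q t b) => [|j|u /andP [tu _] q_ge0 j].
- by rewrite /b; lra.
- apply: (@resolvent_adj_gt0 b j) => [|k]; first by rewrite /b; lra.
  by apply: resolvent_adj_ge0_large; rewrite /b; lra.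
- by apply: resolvent_adj_gt0 => //; apply: lt_le_trans tu.
Qed.

(* The lowest-order coefficient [c] of [q] is nonnegative because [q] is on
   [t > 0]; comparing coefficients in [resolvent_adjE] gives [r c - B c = p_k 1]. *)
Lemma resolvent_adj_lowest_coef (i0 : 'I_m) :
  exists2 c : 'cV[R]_m, mx_nonneg c /\ c != 0 &
    exists2 a : R, 0 <= a & forall i, r * c i 0 = a + (B *m c) i 0.
Proof.
have q_neq0 : q i0 != 0.
  have : 0 < (q i0).[1] by apply: resolvent_adj_gt0 => // j; apply: resolvent_adj_ge0.
  by apply: contraTneq => ->; rewrite horner0 ltxx.
have ex_k : exists k, [exists i, (q i)`_k != 0].
  exists (size (q i0)).-1; apply/existsP; exists i0.
  by rewrite -lead_coefE lead_coef_eq0.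
case: (ex_minnP ex_k) => k /existsP [i1 qi1k_neq0] k_min.
have q_low j i : (j < k)%N -> (q i)`_j = 0.
  move=> jk; apply/eqP; apply: contraTT jk => qij_neq0; rewrite -leqNgt.
  by apply: k_min; apply/existsP; exists i.
have prev_low j i : (j <= k)%N -> (if j == 0%N then 0 else (q i)`_j.-1) = 0.
  by move=> jk; case: ifPn => // j_neq0; rewrite q_low // (leq_trans _ jk) // ltn_predL lt0n.
have p_low j : (j < k)%N -> p`_j = 0.
  move=> jk; have := resolvent_adj_coef j i0.
  rewrite prev_low 1?ltnW // q_low // mulr0 addr0 big1 ?addr0 => [<-//|l _].
  by rewrite q_low ?mulr0.
pose c := \col_i (q i)`_k.
exists c; first split.
- move=> i j; rewrite mxE; apply: poly_lowest_coef_ge0 => [l /q_low //|t t_gt0].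
  exact: resolvent_adj_ge0.
- by apply/eqP => /matrixP /(_ i1 0); rewrite !mxE; apply/eqP.
exists p`_k.
  apply: poly_lowest_coef_ge0 p_low _ => t /char_poly_shift_gt0; exact: ltW.
move=> i; have := resolvent_adj_coef k i; rewrite prev_low // add0r.
rewrite [c i 0]mxE => ->; rewrite mxE; congr (_ + _).
by apply: eq_bigr => j _; rewrite mxE.
Qed.

Lemma nonneg_eigenvector_of_peripheral z :
  z \in eigs B -> cmod z = r ->
  exists2 c : 'cV[R]_m, mx_nonneg c /\ c != 0 & B *m c = r *: c.
Proof.
move=> zB zr.
have [i0 _] : exists i0 : 'I_m, True.
  by move: zB; rewrite mem_eigs => /eigenvalueP [w _ /matrix0Pn [_ [i0 _]]]; exists i0.
have [c [c_ge0 c_neq0] [a a_ge0 cE]] := resolvent_adj_lowest_coef i0.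
exists c => //; have [a_eq0 | a_neq0] := eqVneq a 0.
  by apply/matrixP => i j; rewrite ord1 [in RHS]mxE cE a_eq0 add0r.
(* Otherwise [c] is strictly subinvariant, which confines the spectrum to the
   open disc of radius [r]. *)
have a_gt0 : 0 < a by rewrite lt0r a_neq0.
have Bc_ge0 i : 0 <= (B *m c) i 0 by apply: mx_nonneg_mul.
have c_gt0 i : 0 < c i 0.
  by rewrite -(pmulr_rgt0 _ r_gt0) cE ltr_pwDl.
have Bc_lt i : (B *m c) i 0 < r * c i 0 by rewrite cE ltrDr.
by have := cmod_eigs_lt_of_subinvariant B_ge0 c_gt0 Bc_lt zB; rewrite zr ltxx.
Qed.

End PerronFrobenius.

Theorem perron_frobenius (R : rcfType) m (B : 'M[R]_m) :
  mx_nonneg B -> 0 < spectral_radius B ->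
  exists2 c : 'cV[R]_m, mx_nonneg c /\ c != 0 & B *m c = spectral_radius B *: c.
Proof.
move=> B_ge0 rho_gt0; have [z zB zE] := spectral_radius_attained rho_gt0.
apply: (nonneg_eigenvector_of_peripheral B_ge0 rho_gt0 _ zB zE) => s.
by apply: contraTN; rewrite -leNgt; apply: eigenvalue_le_spectral_radius.
Qed.

Lemma mulmx_colP (R : pzRingType) m n (M N : 'M[R]_(m, n)) :
  (forall u : 'cV_n, M *m u = N *m u) -> M = N.
Proof.
move=> MN; apply/matrixP => i j.
by have /matrixP/(_ i 0) := MN (delta_mx j 0); rewrite -!colE !mxE.
Qed.

Section ProperSplitting.
Variables (R : rcfType) (m n : nat) (A U V : 'M[R]_(m, n)) (Ad Ud : 'M[R]_(n, m)).
Hypotheses (A_MP : is_MP_inverse A Ad) (U_MP : is_MP_inverse U Ud)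
  (AUV : proper_splitting A U V).

Lemma pinvU_proj_A : U *m Ud *m A = A.
Proof.
have [_ range _] := AUV; have [UUdU _ _ _] := U_MP.
apply: mulmx_colP => u; have [z Au] : exists z, A *m u = U *m z by apply/range; exists u.
by rewrite -[LHS]mulmxA Au mulmxA UUdU.
Qed.

Lemma pinvU_proj_V : U *m Ud *m V = V.
Proof.
have [AE _ _] := AUV; have [UUdU _ _ _] := U_MP.
have VE : V = U - A by rewrite AE opprB addrC subrK.
by rewrite [in LHS]VE mulmxBr UUdU pinvU_proj_A.
Qed.

Lemma pinvA_proj_U : U *m Ad *m A = U.
Proof.
have [_ _ null] := AUV; have [AAdA _ _ _] := A_MP.
apply: mulmx_colP => u; apply/eqP; rewrite -subr_eq0 -!mulmxA -mulmxBr.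
by apply/eqP/null; rewrite mulmxBr !mulmxA AAdA subrr.
Qed.

Lemma pinvA_proj_pinvU : Ad *m A *m Ud = Ud.
Proof.
have [_ _ _ AdA_sym] := A_MP; have [_ UdUUd _ UdU_sym] := U_MP.
have UdE : Ud = U^T *m (Ud^T *m Ud) by rewrite mulmxA -trmx_mul UdU_sym UdUUd.
have AdAUt : Ad *m A *m U^T = U^T.
  by rewrite -[Ad *m A]AdA_sym -trmx_mul mulmxA pinvA_proj_U.
by rewrite [in LHS]UdE mulmxA AdAUt -UdE.
Qed.

End ProperSplitting.

Unset Implicit Arguments.

Theorem lemma3p10 (R : rcfType) (m n : nat) (A U V : 'M[R]_(m, n))
    (Ad Ud : 'M[R]_(n, m)) :
  is_MP_inverse A Ad -> mx_nonneg Ad ->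
  is_MP_inverse U Ud ->
  proper_weak_regular_II A U V Ud ->
  0 < spectral_radius (Ud *m V) ->
  exists x : 'cV[R]_n,
    [/\ mx_nonneg x, x != 0,
        Ud *m V *m x = spectral_radius (Ud *m V) *: x,
        mx_nonneg (A *m x) /\ A *m x != 0
      & mx_nonneg (V *m x) /\ V *m x != 0].
Proof.
move=> A_MP Ad_ge0 U_MP [AUV Ud_ge0 VUd_ge0] rho_gt0.
rewrite spectral_radius_mulmxC in rho_gt0 *; set rho := spectral_radius _ in rho_gt0 *.
have [y [y_ge0 y_neq0] VUdy] := perron_frobenius VUd_ge0 rho_gt0.
have rho_neq0 : rho != 0 := lt0r_neq0 rho_gt0.
pose x := Ud *m y.
have Vx : V *m x = rho *: y by rewrite mulmxA.
have Ux : U *m x = y.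
  apply: (scalerI rho_neq0); rewrite !scalemxAr -VUdy !mulmxA.
  by rewrite (pinvU_proj_V U_MP AUV).
have Ax : A *m x = (1 - rho) *: y.
  by have [-> _ _] := AUV; rewrite mulmxBl Ux Vx scalerBl scale1r.
have xE : x = (1 - rho) *: (Ad *m y).
  by rewrite scalemxAr -Ax mulmxA /x mulmxA (pinvA_proj_pinvU A_MP U_MP AUV).
have x_neq0 : x != 0.
  have : rho *: y != 0 by rewrite scaler_eq0 negb_or rho_neq0.
  by rewrite -Vx; apply: contraNneq => ->; rewrite mulmx0.
have rho_lt1 : 0 < 1 - rho.
  have Ady_ge0 := mx_nonneg_mul Ad_ge0 y_ge0.
  exact: mx_nonneg_scale_gt0 (mx_nonneg_mul Ud_ge0 y_ge0) x_neq0 Ady_ge0 xE.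
exists x; split; first exact: mx_nonneg_mul.
- by [].
- by rewrite -mulmxA Vx scalemxAr.
- rewrite Ax scaler_eq0 negb_or gt_eqF //; split => //.
  exact: mx_nonneg_scale (ltW rho_lt1) y_ge0.
- rewrite Vx scaler_eq0 negb_or rho_neq0; split => //.
  exact: mx_nonneg_scale (ltW rho_gt0) y_ge0.
Qed.
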